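(* Let nonempty active action sets $A_{l,i}\subseteq\mathcal{A}$ be given for all $(l,i)\in[k]\times[H]$, and let $\eta$ be the random exploration policy in which, independently for each state $(l,i)$, the action $e_{l,i}$ is drawn uniformly at random from $A_{l,i}$. Let $Q_{l,i}$ be the probability that $\eta$ visits state $(l,i)$ (over the random actions and the random transitions). Then for any $i\in[H-1]$ and $l,s\in[k]$, $$Q_{s,i+1}\ \ge\ \max_{a\in A_{l,i}}\frac{Q_{l,i}}{A}\,p_i(s\mid l,a).$$
   Context: An episodic MDP has states $(l,i)$, $l\in[k]$, $i\in[H]$, start state $(1,1)$, and an action set $\mathcal{A}$ of size $A$. For $i\in[H-1]$, action $a$ at state $(l,i)$ moves to state $(s,i+1)$ with probability $p_i(s\mid l,a)$, independently of everything else. A (possibly randomized) policy that fixes an action at every state is executed from $(1,1)$ by taking the assigned action at each visited state. *)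

From mathcomp Require Import all_boot all_order all_algebra.
Set Implicit Arguments. Unset Strict Implicit. Unset Printing Implicit Defensive.
Import Order.TTheory GRing.Theory Num.Theory.
Local Open Scope ring_scope.

(* States are (l, i) with l : 'I_k (level l+1) and i : 'I_H (step i+1).
   The start state (1,1) is (value 0, step 0).
   p i l a s = p_{i+1}(s+1 | l+1, a), used only for i.+1 < H. *)
Section MDP.
Variables (R : realFieldType) (k H : nat) (Act : finType).
Variable p : nat -> 'I_k -> Act -> 'I_k -> R.

Definition policy := {ffun 'I_k * 'I_H -> Act}.
Definition traj := {ffun 'I_H -> 'I_k}.

Definition traj_prob (e : policy) (x : traj) : R :=
  (\prod_(j : 'I_H | val j == 0%N) (val (x j) == 0%N)%:R) *
  \prod_(j : 'I_H) \prod_(j' : 'I_H | val j' == j.+1)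
      p j (x j) (e (x j, j)) (x j').

Definition eta_prob (Aset : 'I_k -> 'I_H -> {set Act}) (e : policy) : R :=
  \prod_(st : 'I_k * 'I_H)
     ((e st \in Aset st.1 st.2)%:R / #|Aset st.1 st.2|%:R).

Definition visit_prob (Aset : 'I_k -> 'I_H -> {set Act}) (l : 'I_k) (i : 'I_H) : R :=
  \sum_(e : policy) eta_prob Aset e * \sum_(x : traj | x i == l) traj_prob e x.
End MDP.

(* The probability of a trajectory factors at every step i into a past part,
   which depends only on the policy before step i, and a future part, whose sum
   over all continuations of a given prefix is 1.  Hence the probability of
   reaching (l,i) does not depend on the action chosen at (l,i), so conditioning
   the exploration policy on e(l,i) = a divides Q_{l,i} exactly by |A_{l,i}| <= A,
   and from (l,i) the action a then leads to (s,i+1) with probability p_i(s|l,a). *)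

From mathcomp Require Import all_boot all_order all_algebra zify.
Import Order.TTheory GRing.Theory Num.Theory.
Local Open Scope ring_scope.
Set Implicit Arguments. Unset Strict Implicit. Unset Printing Implicit Defensive.

Definition ffun_set (aT : finType) (rT : Type) (f : {ffun aT -> rT}) (a : aT) (v : rT) :
    {ffun aT -> rT} :=
  [ffun x => if x == a then v else f x].

Section FfunSet.
Variables (aT : finType) (rT : eqType) (f : {ffun aT -> rT}) (a : aT).

Lemma ffun_set_at v : ffun_set f a v a = v.
Proof. by rewrite ffunE eqxx. Qed.

Lemma ffun_set_set v w : ffun_set (ffun_set f a v) a w = ffun_set f a w.
Proof. by apply/ffunP => x; rewrite !ffunE; case: eqP. Qed.

Lemma ffun_set_id : ffun_set f a (f a) = f.
Proof. by apply/ffunP => x; rewrite ffunE; case: eqP => // ->. Qed.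

Lemma ffun_set_eq v : (ffun_set f a v == f) = (f a == v).
Proof.
by apply/eqP/eqP => [<-|<-]; [rewrite ffun_set_at | rewrite ffun_set_id].
Qed.

End FfunSet.

Lemma ler_sum_subpred (R : numDomainType) (I : finType) (P Q : pred I) (F : I -> R) :
  (forall i, 0 <= F i) -> (forall i, P i -> Q i) ->
  \sum_(i | P i) F i <= \sum_(i | Q i) F i.
Proof.
move=> F_ge0 PQ; rewrite big_mkcond [leRHS]big_mkcond; apply: ler_sum => i _.
by case: ifP => [/PQ -> // | _]; case: ifP.
Qed.

Section Trajectories.
Variables (R : realFieldType) (k H : nat) (Act : finType).
Variable p : nat -> 'I_k -> Act -> 'I_k -> R.
Hypothesis p_ge0 : forall i l a s, 0 <= p i l a s.
Hypothesis p_sum1 : forall i l a, \sum_(s : 'I_k) p i l a s = 1.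

Local Notation policy := (policy k H Act).
Local Notation traj := (traj k H).

Definition prefix_eq (m : nat) (x y : traj) :=
  [forall j : 'I_H, (j < m)%N ==> (x j == y j)].

Lemma prefix_eqP m (x y : traj) :
  reflect (forall j : 'I_H, (j < m)%N -> x j = y j) (prefix_eq m x y).
Proof.
apply: (iffP forallP) => [h j lt_jm | h j]; first exact/eqP/(implyP (h j)).
by apply/implyP => /h ->.
Qed.

Lemma prefix_eq_refl m (x : traj) : prefix_eq m x x.
Proof. exact/prefix_eqP. Qed.

Lemma prefix_eq_sym m (x y : traj) : prefix_eq m x y = prefix_eq m y x.
Proof. by apply/prefix_eqP/prefix_eqP => h j /h. Qed.

Lemma prefix_eq_set m (x y : traj) (j : 'I_H) v : val j = m ->
  prefix_eq m x y && (x j == v) = prefix_eq m.+1 x (ffun_set y j v).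
Proof.
move=> jm; apply/andP/prefix_eqP => [[/prefix_eqP xy /eqP <-] j' lt_j'm | xy].
  rewrite ffunE; case: eqP => [-> // | /eqP ne_j'j]; apply: xy.
  by move: ne_j'j lt_j'm; rewrite -(inj_eq val_inj) jm /=; lia.
split; last by rewrite xy ?ffun_set_at // jm.
apply/prefix_eqP => j' lt_j'm; rewrite xy; last lia.
by rewrite ffunE; case: eqP => // j'j; move: lt_j'm; rewrite j'j jm ltnn.
Qed.

Definition step_prob (e : policy) (j : 'I_H) (x : traj) : R :=
  \prod_(j' : 'I_H | val j' == j.+1) p j (x j) (e (x j, j)) (x j').

Definition past_prob (e : policy) (i : nat) (x : traj) : R :=
  (\prod_(j : 'I_H | val j == 0%N) (val (x j) == 0%N)%:R) *
  \prod_(j : 'I_H | (j < i)%N) step_prob e j x.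

(* The transitions into steps >= m; it only reads [x] from step m-1 on. *)
Definition future_prob (e : policy) (m : nat) (x : traj) : R :=
  \prod_(j : 'I_H | (m <= j.+1)%N) step_prob e j x.

Lemma traj_prob_split e i x : traj_prob p e x = past_prob e i x * future_prob e i.+1 x.
Proof.
rewrite /traj_prob /past_prob -mulrA; congr (_ * _).
rewrite (bigID (fun j : 'I_H => (j < i)%N)) /= /future_prob; congr (_ * _).
by apply: eq_bigl => j; rewrite ltnS -leqNgt.
Qed.

Lemma step_probE e (j j1 : 'I_H) x : val j1 = j.+1 ->
  step_prob e j x = p j (x j) (e (x j, j)) (x j1).
Proof.
by move=> j1E; rewrite /step_prob (big_pred1 j1) // => j'; rewrite -j1E (inj_eq val_inj).
Qed.

Lemma future_probS e (j : 'I_H) x :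
  future_prob e j.+1 x = step_prob e j x * future_prob e j.+2 x.
Proof.
rewrite /future_prob (bigD1 j) //=; congr (_ * _); apply: eq_bigl => j'.
by rewrite -(inj_eq val_inj) /=; lia.
Qed.

Lemma past_prob_eq (e e' : policy) i (x x' : traj) :
  (forall l (j : 'I_H), (j < i)%N -> e (l, j) = e' (l, j)) ->
  prefix_eq i.+1 x x' -> past_prob e i x = past_prob e' i x'.
Proof.
move=> ee' /prefix_eqP xx'; congr (_ * _).
  by apply: eq_bigr => j /eqP j0; rewrite xx' // j0.
apply: eq_bigr => j lt_ji; rewrite /step_prob xx' 1?ltnW // ee' //.
by apply: eq_bigr => j' /eqP j'E; rewrite xx' // j'E.
Qed.

Lemma future_prob_last e (x : traj) : future_prob e H x = 1.
Proof.
apply: big1 => j le_Hj1; apply: big1 => j' /eqP /= j'E.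
by have := ltn_ord j'; lia.
Qed.

Lemma sum_future_prob e m (y : traj) : (m < H)%N ->
  \sum_(x | prefix_eq m.+1 x y) future_prob e m.+1 x = 1.
Proof.
move=> lt_mH; move En: (H - m.+1)%N => n; elim: n m y En lt_mH => [|n IH] m y En lt_mH.
  have mH : m.+1 = H by lia.
  rewrite mH (big_pred1 y) ?future_prob_last // => x.
  by apply/prefix_eqP/eqP => [xy | -> //]; apply/ffunP => j; apply: xy.
have lt_m1H : (m.+1 < H)%N by lia.
pose jm : 'I_H := Ordinal lt_mH; pose jm1 : 'I_H := Ordinal lt_m1H.
pose q := p m (y jm) (e (y jm, jm)).
transitivity (\sum_(x | prefix_eq m.+1 x y) q (x jm1) * future_prob e m.+2 x).
  apply: eq_bigr => x /prefix_eqP xy.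
  by rewrite (future_probS e jm) (step_probE e x (j1 := jm1)) // xy.
rewrite (partition_big (fun x : traj => x jm1) predT) //= -(p_sum1 m (y jm) (e (y jm, jm))).
apply: eq_bigr => v _; rewrite -[RHS]mulr1 -(IH m.+1 (ffun_set y jm1 v)) 1?big_distrr //=; last lia.
by apply: eq_big => [x | x /andP[_ /eqP ->]]; rewrite ?prefix_eq_set.
Qed.

Lemma eq_sum_prefix_kernel m (P : pred traj) (g f f' : traj -> R) :
  (forall x y, prefix_eq m x y -> P x = P y) ->
  (forall x y, prefix_eq m x y -> g x = g y) ->
  (forall y, \sum_(x | prefix_eq m x y) f x = 1) ->
  (forall y, \sum_(x | prefix_eq m x y) f' x = 1) ->
  \sum_(x | P x) g x * f x = \sum_(x | P x) g x * f' x.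
Proof.
move=> PE gE f1 f'1.
(* Both sides are the double sum [D] over pairs with a common m-prefix, which is
   symmetric because [P] and [g] only see that prefix. *)
pose D u v := \sum_(x | P x) \sum_(y | prefix_eq m y x) g x * u x * v y.
have expand u v : (forall y, \sum_(x | prefix_eq m x y) v x = 1) ->
    \sum_(x | P x) g x * u x = D u v.
  by move=> v1; apply: eq_bigr => x _; rewrite -big_distrr /= v1 mulr1.
have D_sym u v : D u v = D v u.
  rewrite /D (exchange_big_dep P) /= => [|x y Px /PE ->] //.
  apply: eq_bigr => y Py; apply: eq_big => [x | x /andP[_ yx]].
    by rewrite prefix_eq_sym andb_idl // => /PE ->.
  by rewrite -(gE _ _ yx) mulrAC.
by rewrite (expand f f') // D_sym -expand.
Qed.

Definition reach_prob (e : policy) (l : 'I_k) (i : 'I_H) : R :=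
  \sum_(x : traj | x i == l) traj_prob p e x.

Lemma reach_prob_prefix (e e' : policy) l (i : 'I_H) :
  (forall l' (j : 'I_H), (j < i)%N -> e (l', j) = e' (l', j)) ->
  reach_prob e l i = reach_prob e' l i.
Proof.
move=> ee'; rewrite /reach_prob.
under eq_bigr do rewrite (traj_prob_split _ i) (past_prob_eq ee' (prefix_eq_refl _ _)).
under [RHS]eq_bigr do rewrite (traj_prob_split _ i).
apply: (eq_sum_prefix_kernel (m := i.+1)) => [x y /prefix_eqP xy | x y | y | y].
- by rewrite xy.
- exact: past_prob_eq.
- exact: sum_future_prob.
- exact: sum_future_prob.
Qed.

Lemma reach_step_prob e (i i1 : 'I_H) l s : val i1 = i.+1 ->
  \sum_(x : traj | (x i == l) && (x i1 == s)) traj_prob p e x =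
  p i l (e (l, i)) s * reach_prob e l i.
Proof.
move=> i1E.
(* The future of a trajectory forced through (s, i+1); like [future_prob e i.+1]
   it has unit mass on every (i+1)-prefix. *)
pose kernel (x : traj) := if x i1 == s then future_prob e i.+2 x else 0.
have kernel1 y : \sum_(x | prefix_eq i.+1 x y) kernel x = 1.
  rewrite -big_mkcondr (eq_bigl _ _ (fun x => prefix_eq_set x y s i1E)).
  by rewrite sum_future_prob // -i1E ltn_ord.
transitivity (\sum_(x : traj | x i == l) past_prob e i x * (p i l (e (l, i)) s * kernel x)).
  rewrite big_mkcondr; apply: eq_bigr => x /eqP xl; rewrite /kernel.
  case: eqP => [xs | _]; last by rewrite !mulr0.
  by rewrite (traj_prob_split _ i) (future_probS e i) (step_probE e x i1E) xl xs.
rewrite /reach_prob; under eq_bigr do rewrite mulrCA.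
rewrite -big_distrr /=; congr (_ * _).
under [RHS]eq_bigr do rewrite (traj_prob_split _ i).
apply: (eq_sum_prefix_kernel (m := i.+1)) => [x y /prefix_eqP xy | x y | // | y].
- by rewrite xy.
- exact: past_prob_eq.
- exact: sum_future_prob.
Qed.

Lemma traj_prob_ge0 (e : policy) (x : traj) : 0 <= traj_prob p e x.
Proof.
apply: mulr_ge0; first by apply: prodr_ge0 => j _; apply: ler0n.
by apply: prodr_ge0 => j _; apply: prodr_ge0 => j' _; apply: p_ge0.
Qed.

Lemma reach_prob_ge0 (e : policy) l i : 0 <= reach_prob e l i.
Proof. by apply: sumr_ge0 => x _; apply: traj_prob_ge0. Qed.

End Trajectories.

Section Exploration.
Variables (R : realFieldType) (k H : nat) (Act : finType).
Variable p : nat -> 'I_k -> Act -> 'I_k -> R.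
Hypothesis p_ge0 : forall i l a s, 0 <= p i l a s.
Hypothesis p_sum1 : forall i l a, \sum_(s : 'I_k) p i l a s = 1.
Variable Aset : 'I_k -> 'I_H -> {set Act}.

Local Notation policy := (policy k H Act).
Local Notation eta := (eta_prob R Aset).

Lemma eta_prob_ge0 (e : policy) : 0 <= eta e.
Proof. by apply: prodr_ge0 => st _; apply: divr_ge0; apply: ler0n. Qed.

Lemma eta_prob_eq0 st (e : policy) : e st \notin Aset st.1 st.2 -> eta e = 0.
Proof. by move=> /negbTE est; rewrite /eta_prob (bigD1 st) //= est !mul0r. Qed.

Lemma eta_prob_set st (e : policy) v :
  e st \in Aset st.1 st.2 -> v \in Aset st.1 st.2 -> eta (ffun_set e st v) = eta e.
Proof.
move=> Ae Av; rewrite /eta_prob (bigD1 st) //= [RHS](bigD1 st) //= ffun_set_at Ae Av.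
by congr (_ * _); apply: eq_bigr => st' /negbTE st'st; rewrite ffunE st'st.
Qed.

Lemma eq_sum_eta_prob_entry (F : policy -> R) st b c :
  b \in Aset st.1 st.2 -> c \in Aset st.1 st.2 ->
  (forall e v, F (ffun_set e st v) = F e) ->
  \sum_(e : policy | e st == b) eta e * F e = \sum_(e : policy | e st == c) eta e * F e.
Proof.
move=> Ab Ac FE.
rewrite (reindex_onto (fun e => ffun_set e st b) (fun e => ffun_set e st c)) /=; last first.
  by move=> e /eqP <-; rewrite ffun_set_set ffun_set_id.
apply: eq_big => e; rewrite ffun_set_at eqxx ffun_set_set ffun_set_eq // => /eqP ec.
by rewrite FE eta_prob_set // ec.
Qed.

Lemma visit_probE l i a : a \in Aset l i ->
  visit_prob p Aset l i =
  #|Aset l i|%:R * \sum_(e : policy | e (l, i) == a) eta e * reach_prob p e l i.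
Proof.
move=> Aa; rewrite /visit_prob (partition_big (fun e : policy => e (l, i)) predT) //=.
rewrite (bigID (mem (Aset l i))) /= [X in _ + X]big1 ?addr0 => [|b Ab]; last first.
  by apply: big1 => e /eqP eb; rewrite (@eta_prob_eq0 (l, i)) ?mul0r //= eb.
rewrite mulr_natl -sumr_const; apply: eq_bigr => b Ab.
apply: (eq_sum_eta_prob_entry (F := fun e => reach_prob p e l i)) => // e v.
apply: (reach_prob_prefix p_sum1) => l' j lt_ji; rewrite ffunE; case: eqP => // -[_ ji].
by rewrite ji ltnn in lt_ji.
Qed.

Lemma sum_reach_step_le_visit l s a (i i1 : 'I_H) : val i1 = i.+1 ->
  p i l a s * \sum_(e : policy | e (l, i) == a) eta e * reach_prob p e l i
    <= visit_prob p Aset s i1.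
Proof.
move=> i1E; rewrite big_distrr /=.
apply: le_trans (ler_sum_subpred _ (fun e _ => isT)); last first.
  by move=> e; rewrite mulr_ge0 ?eta_prob_ge0 ?reach_prob_ge0.
apply: ler_sum => e /eqP ea; rewrite mulrCA -ea -(reach_step_prob p_sum1 _ _ _ i1E).
rewrite ler_wpM2l ?eta_prob_ge0 //.
by apply: ler_sum_subpred => [x | x /andP[_ //]]; apply: traj_prob_ge0.
Qed.

End Exploration.

Theorem lemma1 (R : realFieldType) (k H : nat) (Act : finType)
  (p : nat -> 'I_k -> Act -> 'I_k -> R)
  (p_ge0 : forall i l a s, 0 <= p i l a s)
  (p_sum1 : forall i l a, \sum_(s : 'I_k) p i l a s = 1)
  (Aset : 'I_k -> 'I_H -> {set Act})
  (Aset_nonempty : forall l i, Aset l i != set0)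
  (i i1 : 'I_H) (hi1 : val i1 = (val i).+1) (l s : 'I_k) :
  forall a, a \in Aset l i ->
    visit_prob p Aset l i / #|Act|%:R * p i l a s <= visit_prob p Aset s i1.
Proof.
move=> a Aa.
set S := \sum_(e : policy k H Act | e (l, i) == a) eta_prob R Aset e * reach_prob p e l i.
have S_ge0 : 0 <= S.
  by apply: sumr_ge0 => e _; rewrite mulr_ge0 ?eta_prob_ge0 ?reach_prob_ge0.
have Aset_le_Act : #|Aset l i|%:R <= #|Act|%:R :> R by rewrite ler_nat max_card.
have Act_gt0 : 0 < #|Act|%:R :> R by rewrite ltr0n; apply/card_gt0P; exists a.
apply: le_trans (sum_reach_step_le_visit p_ge0 p_sum1 Aset l s a hi1).
rewrite mulrC ler_wpM2l // (visit_probE p_sum1 Aa) -/S ler_pdivrMr //.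
by rewrite mulrC ler_wpM2l.
Qed.
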